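(* Suppose there exist a symmetric matrix $B\in\mathbb{R}^{n^2\times n^2}$ with $B\ge0$ entrywise and $B\circ xx^{\top}=0$, and symmetric matrices $T,K,Z,H\in\mathbb{R}^{n\times n}$, such that the matrix $Q:=M-B-S$, where $S=T\otimes I_n+I_n\otimes K+J_n\otimes H+Z\otimes J_n$, satisfies $Qx=0$ and $Q\succeq c\,(I_{n^2}-n^{-1}xx^{\top})$ for some $c\ge0$. Then $X=xx^{\top}$ is a global minimizer of SDR I. If moreover $c>0$, then $xx^{\top}$ is the unique global minimizer of SDR I.
   Context: $A,\Delta\in\mathbb{R}^{n\times n}$ are symmetric, $C=A+\Delta$, $M=(I_n\otimes A-C\otimes I_n)^2$, $x=\mathrm{vec}(I_n)\in\mathbb{R}^{n^2}$ (column stacking), $J_n$ is the all-ones $n\times n$ matrix, $\otimes$ the Kronecker product, $\circ$ the Hadamard (entrywise) product. For $X\in\mathbb{R}^{n^2\times n^2}$, $X_{ij}$ denotes its $(i,j)$-th $n\times n$ block. SDR I is: minimize $\langle M,X\rangle$ over symmetric $X\in\mathbb{R}^{n^2\times n^2}$ subject to $X\succeq0$, $X\ge0$ entrywise, $\mathrm{Tr}(X_{ij})=\delta_{ij}$ and $\langle X_{ij},J_n\rangle=1$ for all $i,j$, $\sum_i X_{ii}=I_n$, $\sum_{i,j}X_{ij}=J_n$. *)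

(* Kronecker product = tensmx from mathcomp-real-closed (mxtens),
   whose convention is the standard one: (A *t B)[(i,k),(j,l)] = A i j * B k l
   with row index i*n+k (mxtens_index (i,k)). *)
From HB Require Import structures.
From mathcomp Require Import all_boot all_order all_algebra.
From mathcomp Require Export mxtens.
Set Implicit Arguments. Unset Strict Implicit. Unset Printing Implicit Defensive.
Import Order.TTheory GRing.Theory Num.Theory.
Local Open Scope ring_scope.

Section SDR.
Variable R : realFieldType.

Definition symmx (m : nat) (A : 'M[R]_m) : Prop := A^T = A.

Definition psdmx (m : nat) (A : 'M[R]_m) : Prop :=
  symmx A /\ forall v : 'cV[R]_m, 0 <= (v^T *m A *m v) 0 0.

Definition loewner_ge (m : nat) (A B : 'M[R]_m) : Prop := psdmx (A - B).

Definition frob (m : nat) (A B : 'M[R]_m) : R := \sum_(i < m) \sum_(j < m) A i j * B i j.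

Definition hadamard (m : nat) (A B : 'M[R]_m) : 'M[R]_m := map2_mx (fun a b => a * b) A B.

Definition Jmx (n : nat) : 'M[R]_n := const_mx 1.

(* column-stacking vectorization: entry (a,b) of A is at position b*n + a *)
Definition vecc (n : nat) (A : 'M[R]_n) : 'cV[R]_(n * n) :=
  \col_p A (mxtens_unindex p).2 (mxtens_unindex p).1.

Definition xvec (n : nat) : 'cV[R]_(n * n) := vecc (1%:M : 'M[R]_n).

Definition Mmat (n : nat) (A C : 'M[R]_n) : 'M[R]_(n * n) :=
  let D := (1%:M : 'M[R]_n) *t A - C *t (1%:M : 'M[R]_n) in D *m D.

Definition blk (n : nat) (X : 'M[R]_(n * n)) (i j : 'I_n) : 'M[R]_n :=
  \matrix_(k, l) X (mxtens_index (i, k)) (mxtens_index (j, l)).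

Definition sdr1_feasible (n : nat) (X : 'M[R]_(n * n)) : Prop :=
  [/\ symmx X, psdmx X & (forall p q, 0 <= X p q)] /\
  [/\ (forall i j : 'I_n, \tr (blk X i j) = (i == j)%:R),
      (forall i j : 'I_n, frob (blk X i j) (Jmx n) = 1),
      \sum_(i < n) blk X i i = 1%:M &
      \sum_(i < n) \sum_(j < n) blk X i j = Jmx n].

Definition sdr1_minimizer (n : nat) (M X : 'M[R]_(n * n)) : Prop :=
  sdr1_feasible X /\ forall Y, sdr1_feasible Y -> frob M X <= frob M Y.

Definition sdr1_unique_minimizer (n : nat) (M X : 'M[R]_(n * n)) : Prop :=
  sdr1_minimizer M X /\ forall Y, sdr1_minimizer M Y -> Y = X.

End SDR.

(* Weak duality. Write M = Q + B + S. On the feasible set of SDR I, <S, Y> is the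
   constant dual objective <T, I> + <K, I> + <H, J> + <Z, J>; <B, Y> >= 0 since B, Y >= 0
   entrywise, and <Q, Y> >= 0 since Q >= c P >= 0 with P = I - x x^T / n. Both extra
   terms vanish at X = x x^T (Q x = 0 and B o x x^T = 0), so X is optimal. If c > 0, any
   other minimiser Y has <Q, Y> = 0, hence <P, Y> = 0. Writing the PSD matrix Y as a
   nonnegative combination of rank-one matrices y y^T turns this into y^T P y = 0 for
   each y, whence P Y = 0: Y is a multiple of x x^T, and <Y_11, J> = 1 fixes it. *)

From HB Require Import structures.
From mathcomp Require Import all_boot all_order all_algebra.
From mathcomp Require Import mxtens.
From mathcomp Require Import ring lra.
Set Implicit Arguments. Unset Strict Implicit. Unset Printing Implicit Defensive.
Import Order.TTheory GRing.Theory Num.Theory.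
Local Open Scope ring_scope.

Section Frobenius.
Variable R : realFieldType.
Implicit Types (m : nat) (a : R).

Lemma frobC m (A C : 'M[R]_m) : frob A C = frob C A.
Proof. by apply: eq_bigr => i _; apply: eq_bigr => j _; rewrite mulrC. Qed.

Lemma frobDl m (A B C : 'M[R]_m) : frob (A + B) C = frob A C + frob B C.
Proof.
rewrite /frob -big_split; apply: eq_bigr => i _; rewrite -big_split.
by apply: eq_bigr => j _; rewrite mxE mulrDl.
Qed.

Lemma frobDr m (A B C : 'M[R]_m) : frob A (B + C) = frob A B + frob A C.
Proof. by rewrite frobC frobDl !(frobC _ A). Qed.

Lemma frobZl m a (A C : 'M[R]_m) : frob (a *: A) C = a * frob A C.
Proof.
rewrite /frob mulr_sumr; apply: eq_bigr => i _; rewrite mulr_sumr.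
by apply: eq_bigr => j _; rewrite mxE mulrA.
Qed.

Lemma frobNl m (A C : 'M[R]_m) : frob (- A) C = - frob A C.
Proof. by rewrite -scaleN1r frobZl mulN1r. Qed.

Lemma frobZr m a (A C : 'M[R]_m) : frob A (a *: C) = a * frob A C.
Proof. by rewrite frobC frobZl frobC. Qed.

Lemma frob0r m (A : 'M[R]_m) : frob A 0 = 0.
Proof. by rewrite -(scale0r 0) frobZr mul0r. Qed.

Lemma frob_sumr m (I : finType) (A : 'M[R]_m) (F : I -> 'M[R]_m) :
  frob A (\sum_k F k) = \sum_k frob A (F k).
Proof.
rewrite /frob; transitivity (\sum_(i < m) \sum_(j < m) \sum_k A i j * F k i j).
  by apply: eq_bigr => i _; apply: eq_bigr => j _; rewrite summxE mulr_sumr.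
by rewrite [RHS]exchange_big; apply: eq_bigr => i _; rewrite [RHS]exchange_big.
Qed.

Lemma frob_hadamard m (A B : 'M[R]_m) : frob A B = \sum_i \sum_j hadamard A B i j.
Proof. by apply: eq_bigr => i _; apply: eq_bigr => j _; rewrite mxE. Qed.

Lemma frob_outer m (W : 'M[R]_m) (u : 'cV[R]_m) :
  frob W (u *m u^T) = (u^T *m W *m u) 0 0.
Proof.
rewrite /frob mxE.
under [RHS]eq_bigr => j _ do rewrite mxE big_distrl.
rewrite [RHS]exchange_big; apply: eq_bigr => i _; apply: eq_bigr => j _.
by rewrite !mxE big_ord1 !mxE /=; ring.
Qed.

Lemma sum_delta_natr m (i : 'I_m) (F : 'I_m -> R) : \sum_j (j == i)%:R * F j = F i.
Proof.
rewrite (bigD1 i) //= eqxx mul1r big1 ?addr0 // => j /negbTE ->.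
by rewrite mul0r.
Qed.

Lemma sum_delta1_natr m (i : 'I_m) : \sum_j (j == i)%:R = 1 :> R.
Proof. by rewrite -[RHS](sum_delta_natr i (fun=> 1)); apply: eq_bigr => j _; rewrite mulr1. Qed.

Lemma frob1l m (A : 'M[R]_m) : frob 1%:M A = \tr A.
Proof.
apply: eq_bigr => k _; under eq_bigr => l _ do rewrite mxE eq_sym.
exact: (sum_delta_natr k (fun l => A k l)).
Qed.

Lemma sum_mxtens_index n (F : 'I_(n * n) -> R) :
  \sum_p F p = \sum_(i < n) \sum_(k < n) F (mxtens_index (i, k)).
Proof.
rewrite pair_big /=; apply: reindex.
exists (@mxtens_unindex n n) => p _; first by rewrite -surjective_pairing mxtens_indexK.
by rewrite -surjective_pairing mxtens_unindexK.
Qed.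

Lemma frob_tens n (A B : 'M[R]_n) (Y : 'M[R]_(n * n)) :
  frob (A *t B) Y = \sum_i \sum_j A i j * frob B (blk Y i j).
Proof.
rewrite /frob sum_mxtens_index; apply: eq_bigr => i _.
under eq_bigr => k _ do rewrite sum_mxtens_index.
rewrite exchange_big; apply: eq_bigr => j _.
rewrite mulr_sumr; apply: eq_bigr => k _; rewrite mulr_sumr; apply: eq_bigr => l _.
by rewrite tensmxE !mxE mulrA.
Qed.

Lemma frob_tens1l n (K : 'M[R]_n) (Y : 'M[R]_(n * n)) :
  frob (1%:M *t K) Y = frob K (\sum_i blk Y i i).
Proof.
rewrite frob_tens frob_sumr; apply: eq_bigr => i _.
under eq_bigr => j _ do rewrite mxE eq_sym.
exact: (sum_delta_natr i (fun j => frob K (blk Y i j))).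
Qed.

Lemma frob_tensJl n (H : 'M[R]_n) (Y : 'M[R]_(n * n)) :
  frob (Jmx R n *t H) Y = frob H (\sum_i \sum_j blk Y i j).
Proof.
rewrite frob_tens frob_sumr; apply: eq_bigr => i _.
by rewrite frob_sumr; apply: eq_bigr => j _; rewrite mxE mul1r.
Qed.

Lemma frob_ge0 m (A Y : 'M[R]_m) :
  (forall p q, 0 <= A p q) -> (forall p q, 0 <= Y p q) -> 0 <= frob A Y.
Proof.
by move=> A_ge0 Y_ge0; apply: sumr_ge0 => p _; apply: sumr_ge0 => q _; apply: mulr_ge0.
Qed.

End Frobenius.

Section Semidefinite.
Variable R : realFieldType.
Implicit Types m : nat.

Definition qform m (Y : 'M[R]_m) (v : 'cV[R]_m) : R := (v^T *m Y *m v) 0 0.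

Lemma bilform_sym m (Y : 'M[R]_m) (v w : 'cV[R]_m) : symmx Y ->
  (v^T *m Y *m w) 0 0 = (w^T *m Y *m v) 0 0.
Proof.
move=> symY; transitivity ((v^T *m Y *m w)^T 0 0); first by rewrite [in RHS]mxE.
by rewrite !trmx_mul trmxK symY mulmxA.
Qed.

Lemma qform_shift m (Y : 'M[R]_m) (v w : 'cV[R]_m) t : symmx Y ->
  qform Y (v + t *: w) = qform Y v + 2 * t * (w^T *m Y *m v) 0 0 + t ^+ 2 * qform Y w.
Proof.
move=> symY; rewrite /qform.
have -> : (v + t *: w)^T = v^T + t *: w^T by rewrite linearD linearZ.
rewrite !mulmxDl !mulmxDr.
have := bilform_sym v w symY; rewrite -!scalemxAl -!scalemxAr !mxE => ->; ring.
Qed.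

Lemma qformD m (A B : 'M[R]_m) v : qform (A + B) v = qform A v + qform B v.
Proof. by rewrite /qform mulmxDr mulmxDl mxE. Qed.

Lemma qformB m (A B : 'M[R]_m) v : qform (A - B) v = qform A v - qform B v.
Proof. by rewrite /qform mulmxBr mulmxBl !mxE. Qed.

Lemma qformZ m a (A : 'M[R]_m) v : qform (a *: A) v = a * qform A v.
Proof. by rewrite /qform -scalemxAr -scalemxAl mxE. Qed.

Lemma qform_delta m (Y : 'M[R]_m) r : qform Y (delta_mx r 0) = Y r r.
Proof. by rewrite /qform trmx_delta -rowE -colE !mxE. Qed.

Lemma qform_outer m (y v : 'cV[R]_m) : qform (y *m y^T) v = ((y^T *m v) 0 0) ^+ 2.
Proof.
rewrite /qform mulmxA -mulmxA mxE big_ord1 expr2; congr (_ * _).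
by rewrite -[in LHS](trmxK y) -trmx_mul mxE.
Qed.

Lemma psdmxD m (A B : 'M[R]_m) : psdmx A -> psdmx B -> psdmx (A + B).
Proof.
move=> [symA qA] [symB qB]; split; first by rewrite /symmx linearD /= symA symB.
by move=> v; rewrite -/(qform _ v) qformD addr_ge0 ?qA ?qB.
Qed.

Lemma psdmxZ m a (A : 'M[R]_m) : 0 <= a -> psdmx A -> psdmx (a *: A).
Proof.
move=> a_ge0 [symA qA]; split; first by rewrite /symmx linearZ /= symA.
by move=> v; rewrite -/(qform _ v) qformZ mulr_ge0 ?qA.
Qed.

Lemma psdmx_gram m (A : 'M[R]_m) : psdmx (A^T *m A).
Proof.
split; first by rewrite /symmx trmx_mul trmxK.
move=> v; rewrite mulmxA -trmx_mul -mulmxA mxE.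
by apply: sumr_ge0 => i _; rewrite mxE -expr2 sqr_ge0.
Qed.

Lemma psdmx_outer m (y : 'cV[R]_m) : psdmx (y *m y^T).
Proof.
split; first by rewrite /symmx trmx_mul trmxK.
by move=> v; rewrite -/(qform _ v) qform_outer sqr_ge0.
Qed.

Lemma loewner_ge_psdmx m (A C : 'M[R]_m) : psdmx C -> loewner_ge A C -> psdmx A.
Proof. by move=> psdC AC; rewrite -(subrK C A); apply: psdmxD. Qed.

(* [t |-> qform Y (v + t e_i)] is a nonnegative quadratic vanishing at [t = 0], so its
   slope [(Y v)_i] is zero; it suffices to test [t = - (Y v)_i / (Y_ii + 1)]. *)
Lemma psdmx_qform0_mul0 m (Y : 'M[R]_m) (v : 'cV[R]_m) :
  psdmx Y -> qform Y v = 0 -> Y *m v = 0.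
Proof.
move=> [symY qY] qv0; apply/matrixP => i j; rewrite (ord1 j) [RHS]mxE.
set w : 'cV[R]_m := delta_mx i 0.
have -> : (Y *m v) i 0 = (w^T *m Y *m v) 0 0.
  by rewrite -mulmxA /w trmx_delta -rowE [RHS]mxE.
set b := (w^T *m Y *m v) 0 0; set c := qform Y w.
have c_ge0 : 0 <= c by apply: qY.
set t := - b / (c + 1).
have eb : b = - (t * (c + 1)) by rewrite /t divfK ?opprK // gt_eqF //; lra.
have := qY (v + t *: w); rewrite -/(qform Y _) qform_shift // qv0 -/b -/c add0r eb.
move=> q_ge0; have t2_ge0 : 0 <= t ^+ 2 by rewrite sqr_ge0.
have /eqP : t ^+ 2 = 0 by nra.
by rewrite expf_eq0 /= => /eqP ->; rewrite mul0r oppr0.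
Qed.

Lemma psdmx_diag0_row0 m (Y : 'M[R]_m) r j : psdmx Y -> Y r r = 0 -> Y r j = 0.
Proof.
move=> psdY Yrr0; have qY0 : qform Y (delta_mx r 0) = 0 by rewrite qform_delta.
have /matrixP/(_ j 0) := psdmx_qform0_mul0 psdY qY0.
by rewrite -colE !mxE -[Y in LHS]psdY.1 mxE.
Qed.

Definition schur_peel m (Y : 'M[R]_m) r : 'M[R]_m :=
  Y - (Y r r)^-1 *: (col r Y *m (col r Y)^T).

Lemma psdmx_schur_peel m (Y : 'M[R]_m) r : psdmx Y -> psdmx (schur_peel Y r).
Proof.
move=> psdY; have [symY qY] := psdY.
have [Yrr0|Yrr_neq0] := eqVneq (Y r r) 0.
  by rewrite /schur_peel Yrr0 invr0 scale0r subr0.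
set a := Y r r; set e : 'cV[R]_m := delta_mx r 0.
split; first by rewrite /symmx /schur_peel linearB linearZ /= symY trmx_mul trmxK.
move=> v; rewrite -/(qform _ v) qformB qformZ qform_outer.
have -> : (col r Y)^T *m v = e^T *m Y *m v by rewrite colE trmx_mul symY.
set b := (_ 0 0).
have := qY (v + (- (b / a)) *: e); rewrite -/(qform Y _) qform_shift // qform_delta -/a -/b.
by congr (0 <= _); field.
Qed.

Lemma schur_peel_pivot_row m (Y : 'M[R]_m) r j :
  symmx Y -> Y r r != 0 -> schur_peel Y r r j = 0.
Proof.
move=> symY Yrr_neq0; have Yjr : Y j r = Y r j by rewrite -[in LHS]symY mxE.
by rewrite !mxE big_ord1 !mxE Yjr; field.
Qed.

Lemma schur_peel_row0 m (Y : 'M[R]_m) r i j :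
  (forall k, Y i k = 0) -> schur_peel Y r i j = 0.
Proof. by move=> Yi0; rewrite !mxE big_ord1 !mxE !Yi0 mul0r mulr0 subrr. Qed.

Definition rank1_sum m (s : seq (R * 'cV[R]_m)) : 'M[R]_m :=
  \sum_(p <- s) p.1 *: (p.2 *m p.2^T).

(* Symmetric Gaussian elimination: rows [k, ..., m-1] are already zero and the Schur
   peel at pivot [k-1] clears the next row while preserving semidefiniteness. *)
Lemma psdmx_rank1_sum m (Y : 'M[R]_m) :
  psdmx Y -> exists2 s, all (fun p => 0 <= p.1) s & Y = rank1_sum s.
Proof.
suff peel k (Z : 'M[R]_m) : psdmx Z -> (forall i j : 'I_m, (k <= i)%N -> Z i j = 0) ->
    exists2 s, all (fun p => 0 <= p.1) s & Z = rank1_sum s.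
  by move=> psdY; apply: (peel m) => // i j; rewrite leqNgt ltn_ord.
elim: k Z => [|k IH] Z psdZ Z0.
  by exists [::]; rewrite // /rank1_sum big_nil; apply/matrixP => i j; rewrite Z0 ?mxE.
have [km|mk] := leqP m k.
  by apply: IH => // i j ki; move: (leq_trans km ki); rewrite leqNgt ltn_ord.
pose r := Ordinal mk.
have [s s_ge0 eZ] : exists2 s, all (fun p => 0 <= p.1) s & schur_peel Z r = rank1_sum s.
  apply: IH; first exact: psdmx_schur_peel.
  move=> i j; rewrite leq_eqVlt => /orP [/eqP ki|ki]; last first.
    by apply: schur_peel_row0 => l; apply: Z0.
  have -> : i = r by apply: val_inj.
  have [Zrr0|Zrr_neq0] := eqVneq (Z r r) 0; last exact: schur_peel_pivot_row psdZ.1 _.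
  by rewrite /schur_peel Zrr0 invr0 scale0r subr0 (psdmx_diag0_row0 _ psdZ).
exists (((Z r r)^-1, col r Z) :: s); first by rewrite /= s_ge0 invr_ge0 -qform_delta psdZ.2.
by rewrite /rank1_sum big_cons -/(rank1_sum s) -eZ /= addrC subrK.
Qed.

Lemma frob_rank1_sum m (W : 'M[R]_m) s :
  frob W (rank1_sum s) = \sum_(p <- s) p.1 * qform W p.2.
Proof.
elim: s => [|p s IH]; first by rewrite /rank1_sum !big_nil frob0r.
by rewrite /rank1_sum !big_cons frobDr frobZr frob_outer -IH.
Qed.

Lemma frob_psdmx_ge0 m (W Y : 'M[R]_m) : psdmx W -> psdmx Y -> 0 <= frob W Y.
Proof.
move=> psdW /psdmx_rank1_sum [s /allP s_ge0 ->]; rewrite frob_rank1_sum big_seq.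
by apply: sumr_ge0 => p /s_ge0 p_ge0; rewrite mulr_ge0 // psdW.2.
Qed.

(* Each rank-one term contributes [p.1 * qform W p.2 >= 0], so all vanish. *)
Lemma psdmx_frob0_mul0 m (W Y : 'M[R]_m) :
  psdmx W -> psdmx Y -> frob W Y = 0 -> W *m Y = 0.
Proof.
move=> psdW /psdmx_rank1_sum [s /allP s_ge0 ->]; rewrite frob_rank1_sum.
have term_ge0 p : p \in s -> 0 <= p.1 * qform W p.2.
  by move=> /s_ge0 p_ge0; rewrite mulr_ge0 // psdW.2.
rewrite big_seq_cond => /eqP; rewrite psumr_eq0; last first.
  by move=> p /andP [ps _]; apply: term_ge0.
move=> /allP term0; rewrite /rank1_sum mulmx_sumr big_seq big1 // => p ps.
have /implyP := term0 p ps; rewrite ps => /(_ isT).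
rewrite mulf_eq0 => /orP [/eqP ->|/eqP Wp0].
  by rewrite scale0r mulmx0.
by rewrite -scalemxAr mulmxA (psdmx_qform0_mul0 psdW Wp0) mul0mx scaler0.
Qed.

Lemma loewner_ge_frob0 m (A C Y : 'M[R]_m) c : 0 < c -> psdmx C -> psdmx Y ->
  loewner_ge A (c *: C) -> frob A Y = 0 -> frob C Y = 0.
Proof.
move=> c_gt0 psdC psdY AC AY0.
have := frob_psdmx_ge0 AC psdY; have := frob_psdmx_ge0 psdC psdY.
rewrite frobDl frobNl frobZl AY0 sub0r oppr_ge0 => CY_ge0 cCY_le0.
by apply/eqP; rewrite eq_le CY_ge0 andbT -(pmulr_rle0 _ c_gt0).
Qed.

End Semidefinite.

Section Sdr1Feasible.
Variables (R : realFieldType) (n : nat).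
Local Notation x := (xvec R n).
Local Notation X := (xvec R n *m (xvec R n)^T).

Lemma xvec_mxtens_index (i k : 'I_n) : x (mxtens_index (i, k)) 0 = (k == i)%:R.
Proof. by rewrite /xvec /vecc mxE mxtens_indexK /= mxE. Qed.

Lemma xvec_ge0 p : 0 <= x p 0.
Proof. by rewrite /xvec /vecc !mxE ler0n. Qed.

Lemma blk_xx (i j k l : 'I_n) : blk X i j k l = (k == i)%:R * (l == j)%:R.
Proof. by rewrite !mxE big_ord1 !mxE !mxtens_indexK. Qed.

Lemma xx_feasible : sdr1_feasible X.
Proof.
split; split.
- exact: (psdmx_outer x).1.
- exact: psdmx_outer.
- by move=> p q; rewrite [X _ _]mxE big_ord1 [x^T _ _]mxE mulr_ge0 ?xvec_ge0.
- move=> i j; rewrite /mxtrace; under eq_bigr => k _ do rewrite blk_xx.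
  exact: (sum_delta_natr i (fun k => (k == j)%:R)).
- move=> i j; rewrite /frob.
  under eq_bigr => k _ do under eq_bigr => l _ do rewrite blk_xx /Jmx mxE mulr1.
  under eq_bigr => k _ do rewrite -mulr_sumr sum_delta1_natr mulr1.
  exact: sum_delta1_natr.
- apply/matrixP => k l; rewrite summxE; under eq_bigr => i _ do rewrite blk_xx eq_sym.
  by rewrite (sum_delta_natr k (fun i => (l == i)%:R)) mxE eq_sym.
- apply/matrixP => k l; rewrite summxE /Jmx mxE.
  under eq_bigr => i _ do rewrite summxE.
  under eq_bigr => i _ do under eq_bigr => j _ do rewrite blk_xx eq_sym [in X in _ * X]eq_sym.
  under eq_bigr => i _ do rewrite -mulr_sumr sum_delta1_natr mulr1.
  exact: sum_delta1_natr.
Qed.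

Lemma trxvec_mul_xvec : x^T *m x = n%:R%:M.
Proof.
apply/matrixP => a b; rewrite (ord1 a) (ord1 b) mxE sum_mxtens_index [RHS]mxE eqxx mulr1n.
under eq_bigr => i _ do under eq_bigr => k _ do rewrite mxE !xvec_mxtens_index.
under eq_bigr => i _ do rewrite (sum_delta_natr i (fun k => (k == i)%:R)) eqxx.
by rewrite sumr_const card_ord.
Qed.

Lemma xx_mul_xx : X *m X = n%:R *: X.
Proof. by rewrite mulmxA -(mulmxA x) trxvec_mul_xvec mul_mx_scalar scalemxAl. Qed.

Lemma frob_dual_feasible (T K H Z : 'M[R]_n) (Y : 'M[R]_(n * n)) : sdr1_feasible Y ->
  frob (T *t 1%:M + 1%:M *t K + Jmx R n *t H + Z *t Jmx R n) Y =
  frob T 1%:M + frob K 1%:M + frob H (Jmx R n) + frob Z (Jmx R n).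
Proof.
move=> [_ [trY JY diagY sumY]].
rewrite !frobDl frob_tens1l frob_tensJl diagY sumY !frob_tens.
congr (_ + _ + _ + _); apply: eq_bigr => i _; apply: eq_bigr => j _.
  by rewrite frob1l trY mxE.
by rewrite frobC JY mxE.
Qed.

Definition perp_xvec : 'M[R]_(n * n) := 1%:M - n%:R^-1 *: X.

Lemma psdmx_perp_xvec : psdmx perp_xvec.
Proof.
suff <- : perp_xvec^T *m perp_xvec = perp_xvec by apply: psdmx_gram.
have -> : perp_xvec^T = perp_xvec by rewrite /perp_xvec linearB linearZ /= trmx1 trmx_mul trmxK.
rewrite /perp_xvec mulmxBl mulmxBr mul1mx mulmxBr mul1mx mulmx1.
rewrite -scalemxAr -scalemxAl xx_mul_xx !scalerA -mulrA.
have [->|n_neq0] := eqVneq (n%:R : R) 0; first by rewrite invr0 !mul0r !scale0r !subr0.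
by rewrite mulVf // mulr1 subrr subr0.
Qed.

Lemma perp_xvec_ker (Y : 'M[R]_(n * n)) :
  symmx Y -> perp_xvec *m Y = 0 -> Y = (n%:R^-1 * n%:R^-1 * qform Y x) *: X.
Proof.
move=> symY PY0.
have YP0 : Y *m perp_xvec = 0.
  have symP : perp_xvec^T = perp_xvec := psdmx_perp_xvec.1.
  by rewrite -symP -symY -trmx_mul PY0 trmx0.
have eYl : Y = n%:R^-1 *: (X *m Y).
  by apply/eqP; rewrite -subr_eq0; move: PY0; rewrite /perp_xvec mulmxBl mul1mx -scalemxAl => ->.
have eYr : Y = n%:R^-1 *: (Y *m X).
  by apply/eqP; rewrite -subr_eq0; move: YP0; rewrite /perp_xvec mulmxBr mulmx1 -scalemxAr => ->.
have XYX : X *m (Y *m X) = qform Y x *: X.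
  have -> : X *m (Y *m X) = x *m (x^T *m Y *m x) *m x^T by rewrite !mulmxA.
  by rewrite [x^T *m Y *m x]mx11_scalar mul_mx_scalar -scalemxAl.
by rewrite {1}eYl {1}eYr -scalemxAr XYX !scalerA.
Qed.

Lemma feasible_scaled_xx a : sdr1_feasible (a *: X) -> a *: X = X.
Proof.
have [n0|n_gt0] := posnP n.
  by move=> _; apply/matrixP => p; have := ltn_ord p; rewrite [in N in (_ < N)%N]n0.
move=> [_ [_ J1 _ _]]; have [_ [_ xxJ1 _ _]] := xx_feasible.
pose i0 := Ordinal n_gt0.
have blkZ : blk (a *: X) i0 i0 = a *: blk X i0 i0 by apply/matrixP => k l; rewrite !mxE.
by move: (J1 i0 i0); rewrite blkZ frobZl xxJ1 mulr1 => ->; rewrite scale1r.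
Qed.

End Sdr1Feasible.

Section WeakDuality.
Variables (R : realFieldType) (n : nat) (M Q B S : 'M[R]_(n * n)).
Local Notation X := (xvec R n *m (xvec R n)^T).
Hypotheses (eM : M = Q + B + S) (psdQ : psdmx Q) (B_ge0 : forall p q, 0 <= B p q).
Hypotheses (frobQX : frob Q X = 0) (frobBX : frob B X = 0).
Hypothesis frobS_feasible : forall Y, sdr1_feasible Y -> frob S Y = frob S X.

Lemma frob_cost_feasible Y :
  sdr1_feasible Y -> frob M Y = frob M X + (frob Q Y + frob B Y).
Proof. by move=> feasY; rewrite eM !frobDl frobQX frobBX frobS_feasible // !add0r addrC. Qed.

Lemma frob_gap_ge0 Y : sdr1_feasible Y -> 0 <= frob Q Y + frob B Y.
Proof.
move=> [[_ psdY Y_ge0] _].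
by apply: addr_ge0; [exact: frob_psdmx_ge0 | exact: frob_ge0].
Qed.

Lemma xx_sdr1_minimizer : sdr1_minimizer M X.
Proof.
split=> [|Y feasY]; first exact: xx_feasible.
by rewrite [frob M Y]frob_cost_feasible // lerDl frob_gap_ge0.
Qed.

Lemma sdr1_minimizer_frob0 Y : sdr1_minimizer M Y -> frob Q Y = 0.
Proof.
move=> [feasY /(_ X (xx_feasible R n))]; rewrite [frob M Y]frob_cost_feasible // gerDl => gap_le0.
have [[_ psdY Y_ge0] _] := feasY.
have /eqP : frob Q Y + frob B Y = 0 by apply/eqP; rewrite eq_le gap_le0 frob_gap_ge0.
by rewrite paddr_eq0 ?(frob_psdmx_ge0 psdQ psdY) ?frob_ge0 // => /andP [/eqP].
Qed.

End WeakDuality.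

Theorem theorem3 (R : realFieldType) (n : nat) (A Delta : 'M[R]_n)
  (B : 'M[R]_(n * n)) (T K Z H : 'M[R]_n) (c : R) :
  symmx A -> symmx Delta ->
  symmx B -> (forall p q, 0 <= B p q) ->
  hadamard B (xvec R n *m (xvec R n)^T) = 0 ->
  symmx T -> symmx K -> symmx Z -> symmx H ->
  0 <= c ->
  let x := xvec R n in
  let M := Mmat A (A + Delta) in
  let S := T *t (1%:M : 'M[R]_n) + (1%:M : 'M[R]_n) *t K
           + Jmx R n *t H + Z *t Jmx R n in
  let Q := M - B - S in
  Q *m x = 0 ->
  loewner_ge Q (c *: (1%:M - (n%:R)^-1 *: (x *m x^T))) ->
  sdr1_minimizer M (x *m x^T) /\
  (0 < c -> sdr1_unique_minimizer M (x *m x^T)).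
Proof.
move=> _ _ _ B_ge0 BX0 _ _ _ _ c_ge0 x M S Q Qx0 QcP.
have psdP := psdmx_perp_xvec R n.
have psdQ : psdmx Q := loewner_ge_psdmx (psdmxZ c_ge0 psdP) QcP.
have frobQX : frob Q (x *m x^T) = 0 by rewrite frob_outer -mulmxA Qx0 mulmx0 mxE.
have frobBX : frob B (x *m x^T) = 0.
  by rewrite frob_hadamard BX0 big1 // => i _; rewrite big1 // => j _; rewrite mxE.
have eM : M = Q + B + S by rewrite /Q -(addrA M) -opprD -addrA subrK.
have frobS_feasible Y : sdr1_feasible Y -> frob S Y = frob S (x *m x^T).
  by move=> feasY; rewrite !frob_dual_feasible //; apply: xx_feasible.
have minX := xx_sdr1_minimizer eM psdQ B_ge0 frobQX frobBX frobS_feasible.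
split=> // c_gt0; split=> // Y minY.
have [[symY psdY _] _] := minY.1.
have QY0 := sdr1_minimizer_frob0 eM psdQ B_ge0 frobQX frobBX frobS_feasible minY.
have PY0 := loewner_ge_frob0 c_gt0 psdP psdY QcP QY0.
have eY := perp_xvec_ker symY (psdmx_frob0_mul0 psdP psdY PY0).
by rewrite eY feasible_scaled_xx -?eY; case: minY.
Qed.
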